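(* Let $n\geq 2$ and let $k$ be a positive integer with $k+2^k-1\leq n$. For every positive integer $c$ with $n-2^k+1\leq c\leq (n-k-2^k+2)2^k-1$, there is an arithmetical structure $(r_1,\dots,r_n)$ on $K_n$ with $r_1=c$.
   Context: An arithmetical structure on the complete graph $K_n$ is an $n$-tuple $(r_1,r_2,\dots,r_n)$ of positive integers with $\gcd(r_1,\dots,r_n)=1$ such that $r_j$ divides $\sum_{i=1}^n r_i$ for every $j$. The entries are always listed so that $r_1\geq r_2\geq\dots\geq r_n$; thus $r_1$ is the largest value of the structure. *)

From mathcomp Require Import all_boot.
Set Implicit Arguments. Unset Strict Implicit. Unset Printing Implicit Defensive.

(* An arithmetical structure on K_n: an n-tuple (r_1,...,r_n) of positive
   integers, listed nonincreasingly (r_1 >= ... >= r_n), with gcd 1 and such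
   that every r_j divides the sum of all entries.  Represented as a list r
   with r_1 = nth 0 r 0. *)
Definition arith_structure_Kn (n : nat) (r : seq nat) : Prop :=
  [/\ size r = n,
      all (fun x => 0 < x) r,
      sorted geq r,
      foldr gcdn 0 r = 1
    & all (fun x => x %| sumn r) r].

From mathcomp Require Import all_boot.
From mathcomp Require Import zify.

Set Implicit Arguments. Unset Strict Implicit. Unset Printing Implicit Defensive.

(* Put p = 2^k and m = n - p + 1.  Suppose c = s_1 + ... + s_m
   where every s_i divides p and some s_i equals 1.  Then the list made of
   p - 1 copies of c together with s_1, ..., s_m has n entries and sum p*c,
   which every entry divides (c does, and each s_i divides p); the entry 1
   forces gcd 1, and c is the largest entry because each s_i <= sum s = c.
   Sorting this list nonincreasingly gives the required structure. *)

Definition dyadic_decomposition (k c : nat) (s : seq nat) : Prop :=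
  [/\ all (fun x => x %| 2 ^ k) s, 1 \in s & sumn s = c].

Lemma dyadic_decomposition_mono k k' c s :
  k <= k' -> dyadic_decomposition k c s -> dyadic_decomposition k' c s.
Proof.
move=> le_kk' [dvd_s one_s sum_s]; split=> //.
by apply/allP=> x /(allP dvd_s) dvd_x; exact: dvdn_trans dvd_x (dvdn_exp2l 2 le_kk').
Qed.

Lemma dyadic_decomposition_cons k j c s :
  j <= k -> dyadic_decomposition k c s ->
  dyadic_decomposition k (2 ^ j + c) (2 ^ j :: s).
Proof.
move=> le_jk [dvd_s one_s sum_s]; split=> /=.
- by rewrite dvdn_exp2l.
- by rewrite inE one_s orbT.
- by rewrite sum_s.
Qed.

(* The numerical heart of the step "peel off a summand 1": for k < m,
   the range for m + 1 summands minus 1 stays inside the range for m. *)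
Lemma size_le_pow2_excess m k : k < m -> m <= (m - k) * 2 ^ k.
Proof.
move=> lt_km; have lt_k_pow := ltn_expl k (isT : 1 < 2).
have : (m - k) * k.+1 <= (m - k) * 2 ^ k by rewrite leq_mul2l lt_k_pow orbT.
nia.
Qed.

Lemma dyadic_decomposition_exists m k c :
  0 < m -> k <= m -> m <= c -> c <= (m + 1 - k) * 2 ^ k - 1 ->
  exists2 s, size s = m & dyadic_decomposition k c s.
Proof.
case: m => // m _; elim: m k c => [|m IH] k c le_k le_c le_cM.
  have -> : c = 1.
    by move: le_k le_cM; case: k => [|[|]] //; rewrite ?expn0 ?expn1; lia.
  by exists [:: 1]; split; rewrite //= dvd1n.
have extend K j k' c' : j <= K -> k' <= K -> k' <= m.+1 -> m.+1 <= c' ->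
    c' <= (m.+1 + 1 - k') * 2 ^ k' - 1 -> c = 2 ^ j + c' ->
    exists2 s, size s = m.+2 & dyadic_decomposition K c s.
  move=> le_jk le_k'k le_k' le_c' le_c'M ->.
  have [s size_s dec_s] := IH k' c' le_k' le_c' le_c'M.
  exists (2 ^ j :: s); first by rewrite /= size_s.
  exact: dyadic_decomposition_cons le_jk (dyadic_decomposition_mono le_k'k dec_s).
(* The bound for k = m.+2 equals the bound for k = m.+1. *)
wlog le_k' : k le_k le_cM / k <= m.+1.
  move=> base; have [le_km|lt_mk] := leqP k m.+1; first exact: base.
  have eq_k : k = m.+2 by lia.
  have [s size_s dec_s] : exists2 s, size s = m.+2 &
      dyadic_decomposition m.+1 c s.
    by apply: base => //; move: le_cM; rewrite eq_k !expnS; lia.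
  by exists s => //; apply: dyadic_decomposition_mono dec_s; lia.
have lt_k_pow := ltn_expl k (isT : 1 < 2).
have [big_c|small_c] := leqP (m.+1 + 2 ^ k) c.
  by apply: (extend k k k (c - 2 ^ k)) => //; lia.
have [lt_km|eq_km] := ltnP k m.+1.
  have le_excess := size_le_pow2_excess lt_km.
  by apply: (extend k 0 k (c - 1)); rewrite ?expn0 //; lia.
(* k = m.+1: use summands of size at most 2^m. *)
have eq_k : k = m.+1 by lia.
rewrite eq_k expnS in le_cM small_c lt_k_pow.
have le_m_pow := ltn_expl m (isT : 1 < 2).
have [le_c2|gt_c2] := leqP c (2 * 2 ^ m).
  by apply: (extend k 0 m (c - 1)); rewrite ?expn0; lia.
by apply: (extend k m m (c - 2 ^ m)); lia.
Qed.

Lemma foldr_gcdn_eq1 (r : seq nat) : 1 \in r -> foldr gcdn 0 r = 1.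
Proof.
elim: r => [//|a r IH] /=; rewrite inE => /orP [/eqP <-|one_r].
  by rewrite gcd1n.
by rewrite IH // gcdn1.
Qed.

Lemma leq_sumn_mem (s : seq nat) x : x \in s -> x <= sumn s.
Proof.
elim: s => [//|a s IH] /=; rewrite inE => /orP [/eqP ->|x_s].
  exact: leq_addr.
exact: leq_trans (IH x_s) (leq_addl _ _).
Qed.

Lemma head_sorted_geq (r : seq nat) c :
  sorted geq r -> c \in r -> {in r, forall x, x <= c} -> nth 0 r 0 = c.
Proof.
move=> sorted_r c_r le_c; have r_gt0 : 0 < size r by case: (r) c_r.
apply/eqP; rewrite eqn_leq le_c ?mem_nth //=.
rewrite -{1}(nth_index 0 c_r).
apply: (sorted_leq_nth (fun a b d h1 h2 => leq_trans h2 h1) (@leqnn) 0 sorted_r);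
  by rewrite ?inE ?index_mem.
Qed.

Lemma arith_structure_of_decomposition d c s :
  1 < d -> all (fun x => x %| d) s -> 1 \in s -> sumn s = c ->
  exists r, arith_structure_Kn (d - 1 + size s) r /\ nth 0 r 0 = c.
Proof.
move=> d_gt1 dvd_s one_s sum_s; set l := nseq (d - 1) c ++ s.
have perm_l : perm_eq (sort geq l) l by rewrite perm_sort perm_refl.
have mem_l x : (x \in sort geq l) = (x \in l) by rewrite (perm_mem perm_l).
have sorted_l : sorted geq (sort geq l).
  by apply: sort_sorted => a b; rewrite /= leq_total.
have c_gt0 : 0 < c by rewrite -sum_s (leq_sumn_mem one_s).
have c_l : c \in l by rewrite mem_cat mem_nseq eqxx andbT subn_gt0 d_gt1.
have le_c x : x \in l -> x <= c.
  rewrite mem_cat mem_nseq => /orP [/andP [_ /eqP ->]//|x_s].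
  by rewrite -sum_s leq_sumn_mem.
have sum_l : sumn (sort geq l) = d * c.
  rewrite (perm_sumn perm_l) sumn_cat sumn_nseq sum_s -mulnSr subn1.
  by rewrite prednK ?(ltnW d_gt1) // mulnC.
have head_l : nth 0 (sort geq l) 0 = c.
  by apply: head_sorted_geq; rewrite ?mem_l // => x; rewrite mem_l; exact: le_c.
exists (sort geq l); split=> //; split=> //.
- by rewrite size_sort size_cat size_nseq.
- apply/allP => x; rewrite mem_l mem_cat mem_nseq => /orP [/andP [_ /eqP ->]//|x_s].
  exact: dvdn_gt0 (ltnW d_gt1) (allP dvd_s x x_s).
- by apply: foldr_gcdn_eq1; rewrite mem_l mem_cat one_s orbT.
- apply/allP => x; rewrite mem_l sum_l mem_cat mem_nseq => /orP [/andP [_ /eqP ->]|x_s].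
    exact: dvdn_mull.
  exact: dvdn_mulr (allP dvd_s x x_s).
Qed.

Theorem proposition2p4 (n k c : nat) :
  2 <= n -> 0 < k -> k + 2 ^ k - 1 <= n ->
  0 < c -> n - 2 ^ k + 1 <= c -> c <= (n + 2 - k - 2 ^ k) * 2 ^ k - 1 ->
  exists r : seq nat, arith_structure_Kn n r /\ nth 0 r 0 = c.
Proof.
move=> _ k_gt0 le_kn _ le_c le_cM.
have pow_gt1 : 1 < 2 ^ k by rewrite -{1}(expn0 2) ltn_exp2l.
have [s size_s [dvd_s one_s sum_s]] :
    exists2 s, size s = n - 2 ^ k + 1 & dyadic_decomposition k c s.
  have size_bound : n + 2 - k - 2 ^ k = n - 2 ^ k + 1 + 1 - k by lia.
  rewrite size_bound in le_cM.
  by apply: dyadic_decomposition_exists => //; lia.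
have [r [arith_r head_r]] :=
  arith_structure_of_decomposition pow_gt1 dvd_s one_s sum_s.
exists r; split=> //.
by have -> : n = 2 ^ k - 1 + size s by rewrite size_s; lia.
Qed.
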